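(* Let $M:\mathbb M\to\mathbb{P}\mathrm{b}$ be a cartesian multicategory (in the sense recalled in the context). Then the following are equivalent: (AP) for every object $X$ of $\mathbb M$ and every map of finite sets $f:M_0X\to J$, there exists an algebraic product for $X$ along $f$; (UP) for every object $X$ of $\mathbb M$ and every map of finite sets $f:M_0X\to J$, there exists a universal product for $X$ along $f$; (R) $M$ is representable, i.e. the functor $M_l:\mathbb M_l\to\mathrm{Set}_f$ is an opfibration whose opcartesian arrows are stable under reindexing: whenever $u$ is an opcartesian loose arrow and $c$ is a cell of $\mathbb M$ whose right loose side is $u$, the left loose side of $c$ is again opcartesian.
   Context: All double categories and double functors are strict. A double category $\mathbb A$ consists of a category $\mathbb A_0$ (objects and tight arrows), a category $\mathbb A_1$ whose objects are the loose arrows and whose morphisms are the cells, source and target functors $s,t:\mathbb A_1\to\mathbb A_0$, and a strictly associative and unital composition of loose arrows and cells; $\mathbb A_l$ denotes the category of objects and loose arrows. A cell has a left loose side (its domain in $\mathbb A_1$), a right loose side (its codomain in $\mathbb A_1$), and top and bottom tight sides. $\mathrm{Set}_f$ is the category of finite sets. $\mathbb{P}\mathrm{b}$ is the double category whose objects are finite sets, whose tight and loose arrows are maps of finite sets, and whose cells are pullback squares: a cell with left side $f:I\to J$, right side $g:L\to K$, top $k:I\to L$, bottom $l:J\to K$ is a pullback square $gk=lf$; loose composition is composition of maps. So $\mathbb{P}\mathrm{b}_0=\mathrm{Set}_f$ and $\mathbb{P}\mathrm{b}_l=\mathrm{Set}_f$. A symmetric multicategory is a double category $\mathbb M$ such that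 $\mathbb M_0$ and $\mathbb M_1$ have finite sums preserved by $s$ and $t$, together with a double functor $M:\mathbb M\to\mathbb{P}\mathrm{b}$ whose components $M_0:\mathbb M_0\to\mathrm{Set}_f$ and $M_1:\mathbb M_1\to\mathbb{P}\mathrm{b}_1$ preserve finite sums and are discrete fibrations; $M_l:\mathbb M_l\to\mathrm{Set}_f$ is its loose part. Consequently: for an object $Y$ and a map $f:I\to M_0Y$ there is a unique tight arrow $\tilde f:f^*Y\to Y$ over $f$; and for a loose arrow $\beta$ and a pullback square in $\mathrm{Set}_f$ with right side $M_l\beta$ there is a unique cell of $\mathbb M$ over it with right side $\beta$. Cartesian multicategory (covariant reindexing form, which the paper gives as equivalent to being an algebra for its monad $(-)^{\mathrm{cart}}$): a symmetric multicategory $M$ together with an assignment, to each loose $\alpha:X\to Z$, tight $f:X\to Y$ and map $h:M_0Y\to M_0Z$ with $h\circ M_0f=M_l\alpha$, of a loose arrow $f^h_!\alpha:Y\to Z$ with $M_l(f^h_!\alpha)=h$, such that: (U) $(\mathrm{id}_X)^{M_l\alpha}_!\alpha=\alpha$; (Functoriality) for tight $g:X\to Y$, $f:Y\to W$ and maps $h':M_0Y\to M_0Z$, $h:M_0W\to M_0Z$ with $h'\circ M_0g=M_l\alpha$ and $h\circ M_0f=h'$: $f^h_!(g^{h'}_!\alpha)=(fg)^h_!\alpha$; (Frobenius) for a cell with left side $\gamma:W\to V$, right side $\alpha:X\to Y$, top $k:W\to X$, bottom $g:V\to Y$, a loose $\beta:V\to Z$ and a map $m:M_0Y\to M_0Z$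 with $m\circ M_0g=M_l\beta$: $k^{m\circ M_l\alpha}_!(\beta\circ\gamma)=(g^m_!\beta)\circ\alpha$; (Tailing) for loose $\alpha:U\to Y$, tight $f:U\to X$, a map $m:M_0X\to M_0Y$ with $m\circ M_0f=M_l\alpha$ and loose $\beta:Y\to Z$: $f^{M_l\beta\circ m}_!(\beta\circ\alpha)=\beta\circ(f^m_!\alpha)$; (Beck–Chevalley) let $\delta=f^h_!\alpha$ with $\alpha:X\to Z$, $f:X\to Y$; let $c_1$ be a cell with right side $\alpha$, bottom a tight $g:Z'\to Z$, left side $\alpha':X'\to Z'$, top $x:X'\to X$, and $c_2$ a cell with right side $\delta$, bottom $g$, left side $\delta':Y'\to Z'$, top $y:Y'\to Y$; if $f':X'\to Y'$ is tight with $y f'=f x$ and $M_l\delta'\circ M_0f'=M_l\alpha'$, then $\delta'=f'^{M_l\delta'}_!\alpha'$. Universal product of $X$ (with $I=M_0X$) along $f:I\to J$: an object $P$ over $J$ and a loose arrow $\pi:f^*P\to X$ with $M_l\pi=\mathrm{id}_I$, such that for every pullback square $h\circ f'=f\circ h'$ in $\mathrm{Set}_f$ (with $f':L\to K$, $h':L\to I$, $h:K\to J$), every object $Q$ over $K$ and every loose $\rho:f'^*Q\to X$ over $h'$, there is a unique cell of $\mathbb M$ with top $\tilde f':f'^*Q\to Q$, bottom $\tilde f:f^*P\to P$, right side some $t:Q\to P$ (over $h$) and left side some $t':f'^*Q\to f^*P$, such that $\rho=\pi\circ t'$. Algebraic product of $X$ along $f:I\to J$: an object $P$ over $J$, a loose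 $\pi:f^*P\to X$ over $\mathrm{id}_I$ and a loose $u:X\to P$ over $f$ such that (i) $\tilde f^{\,\mathrm{id}_J}_!(u\circ\pi)=\mathrm{id}_P$; and (ii) letting $l,h:K\to I$ be the projections of the pullback of $f$ along itself, $f^*u:h^*X\to f^*P$ the left side of the unique cell with right side $u$, top $\tilde h:h^*X\to X$ and bottom $\tilde f$, and $\Delta:X\to h^*X$ the tight arrow over the diagonal $I\to K$ (so $\tilde h\Delta=\mathrm{id}_X$), one has $\Delta^{\,l}_!(\mathrm{id}_X)=\pi\circ(f^*u)$. *)

From Stdlib Require Import FunctionalExtensionality.
From mathcomp Require Import all_boot.

Set Implicit Arguments.
Unset Strict Implicit.
Unset Printing Implicit Defensive.

(* Finite sets.  Set_f is modelled by its standard skeleton: the object n    *)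
(* is the finite set 'I_n = {0,...,n-1}, a map m -> n is a function          *)
(* 'I_m -> 'I_n, composition is function composition.                       *)

Definition castf (a b m n : nat) (eA : a = m) (eB : b = n)
  (f : 'I_m -> 'I_n) : 'I_a -> 'I_b :=
  fun i => cast_ord (esym eB) (f (cast_ord eA i)).

(* pullback square in Set_f : left side f : I -> J, right side g : L -> K,
   top k : I -> L, bottom l : J -> K; commutes (g k = l f) and is universal. *)
Definition isPullback (I J L K : nat) (f : 'I_I -> 'I_J) (g : 'I_L -> 'I_K)
  (k : 'I_I -> 'I_L) (l : 'I_J -> 'I_K) : Prop :=
  g \o k = l \o f /\
  forall (P : nat) (p1 : 'I_P -> 'I_J) (p2 : 'I_P -> 'I_L),
    l \o p1 = g \o p2 ->
    exists! u : 'I_P -> 'I_I, f \o u = p1 /\ k \o u = p2.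

Lemma pb_paste (I J L K L2 K2 : nat) (f : 'I_I -> 'I_J) (g : 'I_L -> 'I_K)
  (h : 'I_L2 -> 'I_K2) (k : 'I_I -> 'I_L) (l : 'I_J -> 'I_K)
  (k' : 'I_L -> 'I_L2) (l' : 'I_K -> 'I_K2) :
  isPullback f g k l -> isPullback g h k' l' ->
  isPullback f h (k' \o k) (l' \o l).
Proof.
move=> [c1 u1] [c2 u2]; split.
  apply: functional_extensionality => x /=.
  have e1 := congr1 (fun F => F x) c1.
  have e2 := congr1 (fun F => F (k x)) c2.
  simpl in e1, e2; by rewrite e2 e1.
move=> P p1 p2 H.
have [v [[hv1 hv2] uv]] := u2 P (l \o p1) p2 H.
have [w [[hw1 hw2] uw]] := u1 P p1 v (esym hv1).
exists w; split.
  split => //; apply: functional_extensionality => x /=.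
  have e1 := congr1 (fun F => F x) hw2.
  have e2 := congr1 (fun F => F x) hv2.
  simpl in e1, e2; by rewrite e1 e2.
move=> w' [h1 h2]; apply: uw; split => //.
have -> // : v = k \o w'.
apply: uv; split => //.
apply: functional_extensionality => x /=.
have e1 := congr1 (fun F => F (w' x)) c1.
have e2 := congr1 (fun F => F x) h1.
simpl in e1, e2; by rewrite e1 e2.
Qed.

Section Sums.
Variables (O : Type) (H : O -> O -> Type)
  (comp : forall a b c : O, H b c -> H a b -> H a c).

Definition is_initial (z : O) : Prop :=
  forall x : O, exists! h : H z x, True.

Definition is_coproduct (a b s : O) (i1 : H a s) (i2 : H b s) : Prop :=
  forall (x : O) (f : H a x) (g : H b x),
    exists! h : H s x, comp h i1 = f /\ comp h i2 = g.

Definition has_finite_sums : Prop :=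
  (exists z, is_initial z) /\
  (forall a b : O, exists (s : O) (i1 : H a s) (i2 : H b s),
      is_coproduct i1 i2).
End Sums.

Definition preserves_finite_sums (O : Type) (H : O -> O -> Type)
  (comp : forall a b c : O, H b c -> H a b -> H a c)
  (O' : Type) (H' : O' -> O' -> Type)
  (comp' : forall a b c : O', H' b c -> H' a b -> H' a c)
  (F : O -> O') (Fh : forall a b : O, H a b -> H' (F a) (F b)) : Prop :=
  (forall z, is_initial H z -> is_initial H' (F z)) /\
  (forall (a b s : O) (i1 : H a s) (i2 : H b s),
      is_coproduct comp i1 i2 -> is_coproduct comp' (Fh _ _ i1) (Fh _ _ i2)).

Arguments preserves_finite_sums {O H} comp {O' H'} comp' F Fh.

Definition homSet (m n : nat) : Type := 'I_m -> 'I_n.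
Definition compSet (a b c : nat) (g : homSet b c) (f : homSet a b) : homSet a c :=
  g \o f.

(* The category Pb_1: objects are maps of finite sets, morphisms are
   pullback squares (left side = source, right side = target). *)
Record FM := MkFM { fd : nat; fc : nat; fmap : 'I_fd -> 'I_fc }.
Arguments fmap : clear implicits.

Definition homPb (x y : FM) : Type :=
  {k : 'I_(fd x) -> 'I_(fd y) &
   {l : 'I_(fc x) -> 'I_(fc y) | isPullback (fmap x) (fmap y) k l}}.

Definition compPb (x y z : FM) (b : homPb y z) (a : homPb x y) : homPb x z :=
  existT _ (projT1 b \o projT1 a)
    (exist _ (proj1_sig (projT2 b) \o proj1_sig (projT2 a))
       (pb_paste (proj2_sig (projT2 a)) (proj2_sig (projT2 b)))).

(* cell f g k l : left loose side f : A -> B, right loose side g : C -> D,   *)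
(* top tight side k : A -> C, bottom tight side l : B -> D.                  *)
(* ccomp  = composition in the category A_1 (tight direction);              *)
(* clcomp = loose composition of cells.                                      *)
Record DblCatData := {
  ob : Type;
  th : ob -> ob -> Type;
  tid : forall A, th A A;
  tcomp : forall A B C, th B C -> th A B -> th A C;
  lo : ob -> ob -> Type;
  lid : forall A, lo A A;
  lcomp : forall A B C, lo B C -> lo A B -> lo A C;
  cell : forall A B C D, lo A B -> lo C D -> th A C -> th B D -> Type;
  cid : forall A B (f : lo A B), cell f f (tid A) (tid B);
  ccomp : forall A B C D E F (f : lo A B) (g : lo C D) (h : lo E F)
            (k : th A C) (l : th B D) (k' : th C E) (l' : th D F),
     cell g h k' l' -> cell f g k l -> cell f h (tcomp k' k) (tcomp l' l);
  clid : forall A C (k : th A C), cell (lid A) (lid C) k k;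
  clcomp : forall A B E C D F (f : lo A B) (f' : lo B E) (g : lo C D)
             (g' : lo D F) (k : th A C) (l : th B D) (m : th E F),
     cell f' g' l m -> cell f g k l -> cell (lcomp f' f) (lcomp g' g) k m
}.

Arguments th {d}.
Arguments tid {d}.
Arguments tcomp {d A B C}.
Arguments lo {d}.
Arguments lid {d}.
Arguments lcomp {d A B C}.
Arguments cell {d A B C D}.
Arguments cid {d A B}.
Arguments ccomp {d A B C D E F f g h k l k' l'}.
Arguments clid {d A C}.
Arguments clcomp {d A B E C D F f f' g g' k l m}.

Record square (D : DblCatData) := Sq {
  sqA : ob D; sqB : ob D; sqC : ob D; sqD : ob D;
  sqf : lo sqA sqB; sqg : lo sqC sqD; sqk : th sqA sqC; sql : th sqB sqD;
  sqc : cell sqf sqg sqk sql }.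
Arguments Sq {D sqA sqB sqC sqD sqf sqg sqk sql}.

Record DblCatLaws (D : DblCatData) : Prop := {
  tcompA : forall (A B C E : ob D) (f : th A B) (g : th B C) (h : th C E),
    tcomp h (tcomp g f) = tcomp (tcomp h g) f;
  tcomp1l : forall (A B : ob D) (f : th A B), tcomp (tid B) f = f;
  tcomp1r : forall (A B : ob D) (f : th A B), tcomp f (tid A) = f;
  lcompA : forall (A B C E : ob D) (f : lo A B) (g : lo B C) (h : lo C E),
    lcomp h (lcomp g f) = lcomp (lcomp h g) f;
  lcomp1l : forall (A B : ob D) (f : lo A B), lcomp (lid B) f = f;
  lcomp1r : forall (A B : ob D) (f : lo A B), lcomp f (lid A) = f;
  ccompA : forall (A B C1 D1 C2 D2 C3 D3 : ob D) (f : lo A B) (g : lo C1 D1)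
      (h : lo C2 D2) (i : lo C3 D3) k l k' l' k'' l''
      (c : cell f g k l) (d : cell g h k' l') (e : cell h i k'' l''),
    Sq (ccomp e (ccomp d c)) = Sq (ccomp (ccomp e d) c);
  ccomp1l : forall (A B C E : ob D) (f : lo A B) (g : lo C E) k l
      (c : cell f g k l), Sq (ccomp (cid g) c) = Sq c;
  ccomp1r : forall (A B C E : ob D) (f : lo A B) (g : lo C E) k l
      (c : cell f g k l), Sq (ccomp c (cid f)) = Sq c;
  clcompA : forall (A1 A2 A3 A4 B1 B2 B3 B4 : ob D)
      (f1 : lo A1 A2) (f2 : lo A2 A3) (f3 : lo A3 A4)
      (g1 : lo B1 B2) (g2 : lo B2 B3) (g3 : lo B3 B4)
      (k1 : th A1 B1) (k2 : th A2 B2) (k3 : th A3 B3) (k4 : th A4 B4)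
      (c : cell f1 g1 k1 k2) (d : cell f2 g2 k2 k3) (e : cell f3 g3 k3 k4),
    Sq (clcomp e (clcomp d c)) = Sq (clcomp (clcomp e d) c);
  clcomp1l : forall (A B C E : ob D) (f : lo A B) (g : lo C E) k l
      (c : cell f g k l), Sq (clcomp (clid l) c) = Sq c;
  clcomp1r : forall (A B C E : ob D) (f : lo A B) (g : lo C E) k l
      (c : cell f g k l), Sq (clcomp c (clid k)) = Sq c;
  interchange : forall (A B E C0 D0 F C' D' F' : ob D)
      (f : lo A B) (f2 : lo B E) (g : lo C0 D0) (g2 : lo D0 F)
      (h : lo C' D') (h2 : lo D' F')
      (k : th A C0) (l : th B D0) (m : th E F)
      (k' : th C0 C') (l' : th D0 D') (m' : th F F')
      (c : cell f g k l) (c' : cell g h k' l')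
      (d : cell f2 g2 l m) (d' : cell g2 h2 l' m'),
    clcomp (ccomp d' d) (ccomp c' c) = ccomp (clcomp d' c') (clcomp d c);
  clcomp_cid : forall (A B E : ob D) (f : lo A B) (f' : lo B E),
    clcomp (cid f') (cid f) = cid (lcomp f' f);
  ccomp_clid : forall (A C E : ob D) (k : th A C) (k' : th C E),
    ccomp (clid k') (clid k) = clid (tcomp k' k);
  clid_tid : forall A : ob D, clid (tid A) = cid (lid A)
}.

(* The category A_1: objects are loose arrows, morphisms are cells. *)
Record LA (D : DblCatData) := MkLA { lsrc : ob D; ltgt : ob D; larr : lo lsrc ltgt }.
Arguments MkLA {D lsrc ltgt}.
Arguments lsrc {D}.
Arguments ltgt {D}.
Arguments larr {D}.

Definition hom1 (D : DblCatData) (x y : LA D) : Type :=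
  {k : th (lsrc x) (lsrc y) & {l : th (ltgt x) (ltgt y) &
     cell (larr x) (larr y) k l}}.

Definition comp1 (D : DblCatData) (x y z : LA D) (b : hom1 y z) (a : hom1 x y)
  : hom1 x z :=
  existT _ (tcomp (projT1 b) (projT1 a))
    (existT _ (tcomp (projT1 (projT2 b)) (projT1 (projT2 a)))
       (ccomp (projT2 (projT2 b)) (projT2 (projT2 a)))).

(* Symmetric multicategories: the data of a double functor M : A -> Pb.      *)
Record MultiData (D : DblCatData) := {
  M0o : ob D -> nat;
  M0a : forall A B : ob D, th A B -> 'I_(M0o A) -> 'I_(M0o B);
  Ml : forall A B : ob D, lo A B -> 'I_(M0o A) -> 'I_(M0o B)
}.
Arguments M0o {D}.
Arguments M0a {D} m {A B}.
Arguments Ml {D} m {A B}.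

Section Multi.
Variables (D : DblCatData) (M : MultiData D).

Definition toFM (x : LA D) : FM := MkFM (Ml M (larr x)).

Definition M1hom
  (hc : forall (A B C E : ob D) (f : lo A B) (g : lo C E) k l (c : cell f g k l),
        isPullback (Ml M f) (Ml M g) (M0a M k) (M0a M l))
  (x y : LA D) (p : hom1 x y) : homPb (toFM x) (toFM y) :=
  existT _ (M0a M (projT1 p))
    (exist _ (M0a M (projT1 (projT2 p))) (hc _ _ _ _ _ _ _ _ (projT2 (projT2 p)))).

Record IsSymMulti : Prop := {
  m0_id : forall A : ob D, M0a M (tid A) = id;
  m0_comp : forall (A B C : ob D) (g : th B C) (f : th A B),
    M0a M (tcomp g f) = M0a M g \o M0a M f;
  ml_id : forall A : ob D, Ml M (lid A) = id;
  ml_comp : forall (A B C : ob D) (g : lo B C) (f : lo A B),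
    Ml M (lcomp g f) = Ml M g \o Ml M f;
  m_cell : forall (A B C E : ob D) (f : lo A B) (g : lo C E) k l
      (c : cell f g k l), isPullback (Ml M f) (Ml M g) (M0a M k) (M0a M l);
  (* M_0 : A_0 -> Set_f is a discrete fibration *)
  m0_dfib : forall (Y : ob D) (n : nat) (f : 'I_n -> 'I_(M0o M Y)),
    exists! p : {X : ob D & th X Y},
      exists e : M0o M (projT1 p) = n,
        M0a M (projT2 p) = castf e (erefl (M0o M Y)) f;
  (* M_1 : A_1 -> Pb_1 is a discrete fibration *)
  m1_dfib : forall (C E : ob D) (b : lo C E) (m n : nat) (f : 'I_m -> 'I_n)
      (k : 'I_m -> 'I_(M0o M C)) (l : 'I_n -> 'I_(M0o M E)),
    isPullback f (Ml M b) k l ->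
    exists! p : {x : LA D & hom1 x (MkLA b)},
      exists (e1 : M0o M (lsrc (projT1 p)) = m)
             (e2 : M0o M (ltgt (projT1 p)) = n),
        [/\ Ml M (larr (projT1 p)) = castf e1 e2 f,
            M0a M (projT1 (projT2 p)) = castf e1 (erefl _) k &
            M0a M (projT1 (projT2 (projT2 p))) = castf e2 (erefl _) l];
  a0_sums : has_finite_sums (@tcomp D);
  a1_sums : has_finite_sums (@comp1 D);
  s_pres : preserves_finite_sums (@comp1 D) (@tcomp D) (@lsrc D)
             (fun x y p => projT1 p);
  t_pres : preserves_finite_sums (@comp1 D) (@tcomp D) (@ltgt D)
             (fun x y p => projT1 (projT2 p));
  m0_pres : preserves_finite_sums (@tcomp D) compSet (M0o M) (@M0a D M);
  m1_pres : preserves_finite_sums (@comp1 D) compPb toFM (M1hom m_cell)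
}.

(* Cartesian structure (covariant reindexing form).                          *)
(* push a f h H  is  f^h_! a.                                                *)
Record CartData := {
  push : forall (X Y Z : ob D) (a : lo X Z) (f : th X Y)
           (h : 'I_(M0o M Y) -> 'I_(M0o M Z)),
         h \o M0a M f = Ml M a -> lo Y Z
}.

Record IsCartesian (C : CartData) : Prop := {
  push_over : forall X Y Z (a : lo X Z) (f : th X Y) h (H : h \o M0a M f = Ml M a),
    Ml M (push C H) = h;
  cart_U : forall X Z (a : lo X Z) (H : Ml M a \o M0a M (tid X) = Ml M a),
    push C H = a;
  cart_funct : forall X Y W Z (a : lo X Z) (g : th X Y) (f : th Y W)
      (h' : 'I_(M0o M Y) -> 'I_(M0o M Z)) (h : 'I_(M0o M W) -> 'I_(M0o M Z))
      (H1 : h' \o M0a M g = Ml M a), h \o M0a M f = h' ->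
    forall (H3 : h \o M0a M f = Ml M (push C H1))
           (H4 : h \o M0a M (tcomp f g) = Ml M a),
      push C H3 = push C H4;
  cart_frob : forall W V X Y Z (gam : lo W V) (a : lo X Y) (k : th W X) (g : th V Y)
      (c : cell gam a k g) (b : lo V Z) (m : 'I_(M0o M Y) -> 'I_(M0o M Z))
      (Hm : m \o M0a M g = Ml M b)
      (H1 : (m \o Ml M a) \o M0a M k = Ml M (lcomp b gam)),
    push C H1 = lcomp (push C Hm) a;
  cart_tail : forall U X Y Z (a : lo U Y) (f : th U X)
      (m : 'I_(M0o M X) -> 'I_(M0o M Y)) (Hm : m \o M0a M f = Ml M a)
      (b : lo Y Z) (H1 : (Ml M b \o m) \o M0a M f = Ml M (lcomp b a)),
    push C H1 = lcomp b (push C Hm);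
  cart_BC : forall X Y Z (a : lo X Z) (f : th X Y)
      (h : 'I_(M0o M Y) -> 'I_(M0o M Z)) (Hh : h \o M0a M f = Ml M a)
      X' Y' Z' (a' : lo X' Z') (x : th X' X) (g : th Z' Z)
      (c1 : cell a' a x g)
      (d' : lo Y' Z') (y : th Y' Y) (c2 : cell d' (push C Hh) y g)
      (f' : th X' Y'), tcomp y f' = tcomp f x ->
    forall H : Ml M d' \o M0a M f' = Ml M a',
      d' = push C H
}.

(* Universal products.  P is over J (eP), Q = f^*P (eQ : M0 Q = I = M0 X),   *)
(* ft : f^*P -> P is the tight arrow over f, pi : f^*P -> X over id_I.       *)
Definition univ_product (X : ob D) (J : nat) (f : 'I_(M0o M X) -> 'I_J)
  (P Q : ob D) (eP : M0o M P = J) (eQ : M0o M Q = M0o M X)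
  (ft : th Q P) (pi : lo Q X) : Prop :=
  [/\ M0a M ft = castf eQ eP f,
      Ml M pi = castf eQ (erefl (M0o M X)) id &
      forall (L K : nat) (f' : 'I_L -> 'I_K) (h' : 'I_L -> 'I_(M0o M X))
             (h : 'I_K -> 'I_J),
        isPullback f' f h' h ->
        forall (Q' R : ob D) (eR : M0o M R = L) (eQ' : M0o M Q' = K)
               (u : th R Q'),
          M0a M u = castf eR eQ' f' ->
          forall rho : lo R X, Ml M rho = castf eR (erefl (M0o M X)) h' ->
          exists! p : {t' : lo R Q & {t : lo Q' P & cell t' t u ft}},
            Ml M (projT1 (projT2 p)) = castf eQ' eP h /\
            rho = lcomp pi (projT1 p)].

Definition UP : Prop :=
  forall (X : ob D) (J : nat) (f : 'I_(M0o M X) -> 'I_J),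
    exists (P Q : ob D) (eP : M0o M P = J) (eQ : M0o M Q = M0o M X)
           (ft : th Q P) (pi : lo Q X),
      univ_product f eP eQ ft pi.

Definition alg_product (C : CartData) (X : ob D) (J : nat)
  (f : 'I_(M0o M X) -> 'I_J)
  (P Q : ob D) (eP : M0o M P = J) (eQ : M0o M Q = M0o M X)
  (ft : th Q P) (pi : lo Q X) (u : lo X P) : Prop :=
  [/\ M0a M ft = castf eQ eP f,
      Ml M pi = castf eQ (erefl (M0o M X)) id,
      Ml M u = castf (erefl (M0o M X)) eP f,
      (forall H : id \o M0a M ft = Ml M (lcomp u pi),
         push C H = lid P) &
      (* (ii): for the pullback (K, l, h) of f along itself, the reindexing
         h^*X (R, ht), the cell fu := f^*u over the pullback square, and the
         tight arrow Delta over the diagonal d *)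
      (forall (K : nat) (l h : 'I_K -> 'I_(M0o M X)),
         isPullback l f h f ->
         forall (R : ob D) (eR : M0o M R = K) (ht : th R X),
           M0a M ht = castf eR (erefl (M0o M X)) h ->
           forall (fu : lo R Q) (c : cell fu u ht ft),
             Ml M fu = castf eR eQ l ->
             forall d : 'I_(M0o M X) -> 'I_K, l \o d = id -> h \o d = id ->
             forall Delta : th X R,
               M0a M Delta = castf (erefl (M0o M X)) eR d ->
               forall H : castf eR (erefl (M0o M X)) l \o M0a M Delta
                          = Ml M (lid X),
                 push C H = lcomp pi fu)].

Definition AP (C : CartData) : Prop :=
  forall (X : ob D) (J : nat) (f : 'I_(M0o M X) -> 'I_J),
    exists (P Q : ob D) (eP : M0o M P = J) (eQ : M0o M Q = M0o M X)
           (ft : th Q P) (pi : lo Q X) (u : lo X P),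
      alg_product C f eP eQ ft pi u.

Definition opcartesian (X Y : ob D) (u : lo X Y) : Prop :=
  forall (Z : ob D) (w : lo X Z) (g : 'I_(M0o M Y) -> 'I_(M0o M Z)),
    g \o Ml M u = Ml M w ->
    exists! v : lo Y Z, Ml M v = g /\ lcomp v u = w.

Definition is_opfibration : Prop :=
  forall (X : ob D) (n : nat) (f : 'I_(M0o M X) -> 'I_n),
    exists (Y : ob D) (u : lo X Y) (e : M0o M Y = n),
      Ml M u = castf (erefl (M0o M X)) e f /\ opcartesian u.

Definition representable : Prop :=
  is_opfibration /\
  forall (A B C E : ob D) (f : lo A B) (u : lo C E) (k : th A C) (l : th B E)
         (c : cell f u k l),
    opcartesian u -> opcartesian f.

End Multi.

From Stdlib Require Import FunctionalExtensionality ProofIrrelevance.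
From mathcomp Require Import all_boot.

(* An algebraic product (P, pi, u) is determined by its unit u, and the
   cartesian axioms make u opcartesian: given w out of X whose underlying map
   factors through that of u, the Frobenius, tailing and functoriality laws
   turn condition (ii) into the equation (push (w pi)) u = w, and condition (i)
   gives uniqueness.  Condition (ii) holding for one reindexing of u holds for
   all of them (compare two reindexings by Beck-Chevalley), and it survives
   reindexing along cells and transport along isomorphisms of loose arrows;
   hence AP gives representability.  Conversely an opcartesian arrow u,
   reindexed along the tight arrow over M_l u, yields pi and satisfies (i) and
   (ii).  Finally (i) and (ii) say exactly that the cell t' => push (u rho) is
   the unique solution of each universal problem for (P, pi), while a
   universal product builds u from the solution over the kernel pair of f and
   proves (i) by uniqueness. *)

Set Implicit Arguments.
Unset Strict Implicit.
Unset Printing Implicit Defensive.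

Lemma castf_id m n (f : 'I_m -> 'I_n) : castf erefl erefl f = f.
Proof. by apply: functional_extensionality => i; rewrite /castf !cast_ord_id. Qed.

Lemma existT_inj (U : Type) (P : U -> Type) (p : U) (x y : P p) :
  existT P p x = existT P p y -> x = y.
Proof. exact: inj_pair2. Qed.

Section FinitePullbacks.

Variables I J L K : nat.
Implicit Types (f : 'I_I -> 'I_J) (g : 'I_L -> 'I_K) (k : 'I_I -> 'I_L) (l : 'I_J -> 'I_K).

Lemma pb_comm f g k l : isPullback f g k l -> g \o k = l \o f.
Proof. by case. Qed.

Lemma pb_factor f g k l : isPullback f g k l ->
  forall P (p1 : 'I_P -> 'I_J) (p2 : 'I_P -> 'I_L),
  l \o p1 = g \o p2 -> exists u : 'I_P -> 'I_I, f \o u = p1 /\ k \o u = p2.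
Proof. by case=> _ H P p1 p2 E; have [u [Hu _]] := H P p1 p2 E; exists u. Qed.

Lemma pb_mono f g k l : isPullback f g k l ->
  forall P (u v : 'I_P -> 'I_I), f \o u = f \o v -> k \o u = k \o v -> u = v.
Proof.
case=> Hc H P u v E1 E2.
have E : l \o (f \o u) = g \o (k \o u).
  by apply: functional_extensionality => x /=; have /= -> := equal_f Hc (u x).
have [w [_ Hw]] := H P _ _ E.
by rewrite -(Hw u (conj erefl erefl)) (Hw v (conj (esym E1) (esym E2))).
Qed.

Lemma pb_sym f g k l : isPullback f g k l -> isPullback k l f g.
Proof.
case=> Hc H; split; first by rewrite Hc.
move=> P p1 p2 E; have [w [[H1 H2] Hw]] := H P p2 p1 (esym E).
by exists w; split=> // w' [? ?]; apply: Hw.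
Qed.

Lemma pb_bij f g k l :
  bijective f -> injective g -> g \o k = l \o f -> isPullback f g k l.
Proof.
move=> [f' fK f'K] g_inj Hc; split=> // P p1 p2 E.
exists (f' \o p1); split.
  split; apply: functional_extensionality => x /=; first by rewrite f'K.
  apply: g_inj; have /= -> := equal_f Hc (f' (p1 x)).
  by rewrite f'K; exact: equal_f E x.
by move=> w [<- _]; apply: functional_extensionality => x /=; rewrite fK.
Qed.

End FinitePullbacks.

Lemma pb_shift_bij I J J' L K (f : 'I_I -> 'I_J) (g : 'I_L -> 'I_K) k
  (l : 'I_J' -> 'I_K) (b : 'I_J -> 'I_J') :
  bijective b -> isPullback f g k (l \o b) -> isPullback (b \o f) g k l.
Proof.
move=> [b' bK b'K] [Hc H]; split; first by rewrite Hc.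
move=> P p1 p2 E.
have E' : (l \o b) \o (b' \o p1) = g \o p2.
  by apply: functional_extensionality => x /=; rewrite b'K; exact: equal_f E x.
have [w [[H1 H2] Hw]] := H P _ _ E'.
exists w; split.
  split=> //; apply: functional_extensionality => x /=.
  by have /= -> := equal_f H1 x; rewrite b'K.
move=> w' [H1' H2']; apply: Hw; split=> //.
by apply: functional_extensionality => x /=; have /= <- := equal_f H1' x; rewrite bK.
Qed.

Lemma pb_paste_cancel A B C E C' E' (F : 'I_A -> 'I_B) (G : 'I_C -> 'I_E)
  (H : 'I_C' -> 'I_E') (s : 'I_A -> 'I_C) (t : 'I_B -> 'I_E)
  (s' : 'I_C -> 'I_C') (t' : 'I_E -> 'I_E') :
  G \o s = t \o F -> isPullback G H s' t' ->
  isPullback F H (s' \o s) (t' \o t) -> isPullback F G s t.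
Proof.
move=> Hc HR [_ HO]; split=> // P p1 p2 E0.
have E1 : (t' \o t) \o p1 = H \o (s' \o p2).
  apply: functional_extensionality => x /=; have /= -> := equal_f E0 x.
  exact: esym (equal_f (pb_comm HR) (p2 x)).
have [w [[H1 H2] Hw]] := HO P _ _ E1.
have Hs : s \o w = p2.
  apply: (pb_mono HR); apply: functional_extensionality => x /=.
    by have /= -> := equal_f Hc (w x); have /= -> := equal_f H1 x; exact: equal_f E0 x.
  exact: equal_f H2 x.
by exists w; split=> // w' [H1' H2']; apply: Hw; rewrite -H2'.
Qed.

Lemma pb_exists m n p (g : 'I_m -> 'I_p) (l : 'I_n -> 'I_p) :
  exists K (F : 'I_K -> 'I_n) (k : 'I_K -> 'I_m), isPullback F g k l.
Proof.
pose A := [set x : 'I_n * 'I_m | l x.1 == g x.2].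
exists #|A|, (fun i => (enum_val i).1), (fun i => (enum_val i).2); split.
  by apply: functional_extensionality => i /=; have := enum_valP i; rewrite inE => /eqP ->.
move=> P p1 p2 E.
have Ap x : (p1 x, p2 x) \in A by rewrite inE; apply/eqP; exact: equal_f E x.
exists (fun x => enum_rank_in (Ap x) (p1 x, p2 x)); split.
  by split; apply: functional_extensionality => x /=; rewrite enum_rankK_in.
move=> w [H1 H2]; apply: functional_extensionality => x; apply: enum_val_inj.
by rewrite enum_rankK_in // -(equal_f H1 x) -(equal_f H2 x) /=; case: (enum_val _).
Qed.

Section Products.
Variables (D : DblCatData) (HD : DblCatLaws D) (M : MultiData D) (HM : IsSymMulti M)
  (C : CartData M) (HC : IsCartesian C).

Lemma tight_over_eq Y A A' (t : th A Y) (t' : th A' Y) (e : M0o M A' = M0o M A) :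
  M0a M t' = castf e erefl (M0a M t) -> existT (fun X => th X Y) A' t' = existT _ A t.
Proof.
move=> Et; have [p [_ Hp]] := m0_dfib HM (M0a M t).
rewrite -(Hp (existT _ A' t')); last by exists e.
by apply: Hp; exists erefl; rewrite castf_id.
Qed.

Lemma M0a_inj A B : injective (@M0a D M A B).
Proof.
move=> t t' E; apply: (@existT_inj _ (fun X => th X B)).
by apply: (tight_over_eq (e := erefl)); rewrite castf_id E.
Qed.

Lemma tight_factor A B Y (p : th A Y) (q : th B Y) (s : 'I_(M0o M A) -> 'I_(M0o M B)) :
  M0a M q \o s = M0a M p -> exists j : th A B, M0a M j = s /\ tcomp q j = p.
Proof.
move=> E; have [[X j] [[/= e Ej] _]] := m0_dfib HM s.
have Eqj : existT (fun X => th X Y) X (tcomp q j) = existT _ A p.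
  apply: (tight_over_eq (e := e)); rewrite (m0_comp HM) Ej -E.
  by apply: functional_extensionality => x; rewrite /castf /= !cast_ord_id.
have /= eX := f_equal (@projT1 _ _) Eqj; subst X.
rewrite (eq_irrelevance e erefl) castf_id in Ej.
by exists j; split=> //; exact: existT_inj Eqj.
Qed.

Lemma tight_lift Y n (phi : 'I_n -> 'I_(M0o M Y)) :
  exists X (t : th X Y) (e : M0o M X = n), M0a M t = castf e erefl phi.
Proof. by have [[X t] [[e Et] _]] := m0_dfib HM phi; exists X, t, e. Qed.

Lemma tight_lift_bij Y Z (phi : 'I_(M0o M Z) -> 'I_(M0o M Y)) :
  exists X (t : th X Y) (i : 'I_(M0o M X) -> 'I_(M0o M Z)),
    bijective i /\ M0a M t = phi \o i.
Proof.
have [X [t [e Et]]] := tight_lift phi.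
exists X, t, (cast_ord e); split.
  by exists (cast_ord (esym e)) => x; rewrite ?cast_ordK ?cast_ordKV.
by rewrite Et; apply: functional_extensionality => x; rewrite /castf cast_ord_id.
Qed.

Lemma cell_lift A B Y Z (g : lo Y Z) (k : th A Y) (l : th B Z)
  (F : 'I_(M0o M A) -> 'I_(M0o M B)) :
  isPullback F (Ml M g) (M0a M k) (M0a M l) ->
  exists (f : lo A B) (c : cell f g k l), Ml M f = F.
Proof.
move=> Hpb.
have [[[A' B' f] [k' [l' c]]] [[/= e1 [e2 [Ef Ek El]]] _]] := m1_dfib HM Hpb.
have EA := tight_over_eq Ek; have /= eA := f_equal (@projT1 _ _) EA; subst A'.
have EB := tight_over_eq El; have /= eB := f_equal (@projT1 _ _) EB; subst B'.
have ek := existT_inj EA; have el := existT_inj EB; subst k' l'.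
rewrite (eq_irrelevance e1 erefl) (eq_irrelevance e2 erefl) castf_id in Ef.
by exists f, c.
Qed.

Lemma cell_lift_uniq A B Y Z (f f' : lo A B) (g : lo Y Z) k l
  (c : cell f g k l) (c' : cell f' g k l) :
  Ml M f = Ml M f' -> existT (fun f => cell f g k l) f c = existT _ f' c'.
Proof.
move=> Ef; have [p [_ Hp]] := m1_dfib HM (m_cell HM c).
pose pf := existT (fun x => hom1 x (MkLA g)) (MkLA f) (existT _ k (existT _ l c)).
pose pf' := existT (fun x => hom1 x (MkLA g)) (MkLA f') (existT _ k (existT _ l c')).
have Ep : pf = pf'.
  rewrite -(Hp pf); first apply: Hp.
  - by exists erefl, erefl; rewrite /= Ef !castf_id.
  - by exists erefl, erefl; rewrite /= !castf_id.
have /= [ef] := f_equal (@projT1 _ _) Ep; have {}ef := existT_inj (existT_inj ef).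
subst f'; by have -> := existT_inj (existT_inj (existT_inj Ep)).
Qed.

Lemma cell_left_inj A B Y Z (f f' : lo A B) (g : lo Y Z) k l :
  cell f g k l -> cell f' g k l -> Ml M f = Ml M f' -> f = f'.
Proof. by move=> c c' /(cell_lift_uniq c c') /(f_equal (@projT1 _ _)). Qed.

Lemma cell_pullback (A B B' : ob D) (b : lo A B) (l : th B' B) :
  exists A' (k : th A' A) (b' : lo A' B'), inhabited (cell b' b k l).
Proof.
have [K [F [k Hpb]]] := pb_exists (Ml M b) (M0a M l).
have [A' [t [e Et]]] := tight_lift k.
subst K; rewrite castf_id in Et; rewrite -Et in Hpb.
by have [b' [c _]] := cell_lift Hpb; exists A', t, b'.
Qed.

Lemma cell_factor A0 B0 A B Y Z (f0 : lo A0 B0) (f : lo A B) (a : lo Y Z)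
  (k0 : th A0 Y) (l0 : th B0 Z) (k : th A Y) (l : th B Z) (j : th A0 A) (m : th B0 B) :
  cell f0 a k0 l0 -> cell f a k l -> tcomp k j = k0 -> tcomp l m = l0 ->
  Ml M f \o M0a M j = M0a M m \o Ml M f0 -> inhabited (cell f0 f j m).
Proof.
move=> c0 c Ek El Ec.
have Hpb : isPullback (Ml M f0) (Ml M f) (M0a M j) (M0a M m).
  apply: (pb_paste_cancel Ec (m_cell HM c)).
  by rewrite -!(m0_comp HM) Ek El; exact: (m_cell HM c0).
have [f' [c' Ef']] := cell_lift Hpb.
have c'' := ccomp c c'; rewrite Ek El in c''.
by rewrite -(cell_left_inj c'' c0 Ef'); exists.
Qed.

Lemma cell_squareE A B Y Z (f : lo A B) (g : lo Y Z) k l (c : cell f g k l) x :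
  Ml M g (M0a M k x) = M0a M l (Ml M f x).
Proof. exact: equal_f (pb_comm (m_cell HM c)) x. Qed.

Lemma M0a_compE A B Y (g : th B Y) (f : th A B) x :
  M0a M (tcomp g f) x = M0a M g (M0a M f x).
Proof. by rewrite (m0_comp HM). Qed.

Lemma Ml_compE A B Y (g : lo B Y) (f : lo A B) x :
  Ml M (lcomp g f) x = Ml M g (Ml M f x).
Proof. by rewrite (ml_comp HM). Qed.

Lemma push_ext X Y Z (a a' : lo X Z) (f f' : th X Y) h h'
  (H : h \o M0a M f = Ml M a) (H' : h' \o M0a M f' = Ml M a') :
  a = a' -> f = f' -> h = h' -> push C H = push C H'.
Proof. by move=> ea ef eh; subst; rewrite (proof_irrelevance _ H H'). Qed.

Lemma push_tid X Z (a : lo X Z) (t : th X X) h (H : h \o M0a M t = Ml M a) :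
  t = tid X -> push C H = a.
Proof.
move=> Et; subst t.
have H' : Ml M a \o M0a M (tid X) = Ml M a by rewrite (m0_id HM).
by rewrite -{2}(cart_U HC H'); apply: push_ext; rewrite // -H (m0_id HM).
Qed.

Lemma push_comp X Y W Z (a : lo X Z) (g : th X Y) (f : th Y W) h' h
  (H1 : h' \o M0a M g = Ml M a) (H2 : h \o M0a M f = Ml M (push C H1))
  (t : th X W) (H : h \o M0a M t = Ml M a) :
  t = tcomp f g -> push C H2 = push C H.
Proof. by move=> Et; subst t; apply: (cart_funct HC _ H2 H); rewrite H2 (push_over HC). Qed.

Lemma push_tail U X Y Z (a : lo U Y) (f : th U X) m (Hm : m \o M0a M f = Ml M a)
  (b : lo Y Z) m' (H : m' \o M0a M f = Ml M (lcomp b a)) :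
  m' = Ml M b \o m -> push C H = lcomp b (push C Hm).
Proof.
move=> Em; have H1 : (Ml M b \o m) \o M0a M f = Ml M (lcomp b a) by rewrite -Em.
by rewrite -(cart_tail HC Hm H1); apply: push_ext.
Qed.

Lemma push_frob W V X Y Z (gam : lo W V) (a : lo X Y) (k : th W X) (g : th V Y)
  (c : cell gam a k g) (b : lo V Z) m (Hm : m \o M0a M g = Ml M b)
  h (H : h \o M0a M k = Ml M (lcomp b gam)) :
  h = m \o Ml M a -> push C H = lcomp (push C Hm) a.
Proof.
move=> Eh; have H1 : (m \o Ml M a) \o M0a M k = Ml M (lcomp b gam) by rewrite -Eh.
by rewrite -(cart_frob HC c Hm H1); apply: push_ext.
Qed.

Lemma cell_tid_push W R Z (gam : lo W Z) (rho : lo R Z) (j : th W R)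
  (c : cell gam rho j (tid Z)) (H : Ml M rho \o M0a M j = Ml M gam) :
  rho = push C H.
Proof.
have Hid : Ml M rho \o M0a M (tid R) = Ml M rho by rewrite (m0_id HM).
have c' : cell rho (push C Hid) (tid R) (tid Z) by rewrite (cart_U HC); exact: cid.
exact: (cart_BC HC c c' erefl H).
Qed.

Lemma cell_push_left X Y Z (a : lo X Z) (f : th X Y) h (Hh : h \o M0a M f = Ml M a)
  X' Y' Z' (a' : lo X' Z') (x : th X' X) (g : th Z' Z) (d' : lo Y' Z') (y : th Y' Y) :
  cell a' a x g -> cell d' (push C Hh) y g ->
  exists (f' : th X' Y') (H : Ml M d' \o M0a M f' = Ml M a'),
    tcomp y f' = tcomp f x /\ d' = push C H.
Proof.
move=> c1 c2.
have Ec : M0a M g \o Ml M a' = Ml M (push C Hh) \o M0a M (tcomp f x).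
  apply: functional_extensionality => z /=.
  by rewrite (push_over HC) M0a_compE -(cell_squareE c1); have /= -> := equal_f Hh.
have [s [Es1 Es2]] := pb_factor (m_cell HM c2) Ec.
have [f' [Ef' Eyf']] := tight_factor Es2.
have H : Ml M d' \o M0a M f' = Ml M a' by rewrite Ef'.
by exists f', H; split; last exact: (cart_BC HC c1 c2 Eyf' H).
Qed.

(* Condition (ii) of an algebraic product with unit [a]: [ht], [fu] and [Dl]
   play the roles of the tight arrow over h, of f^*u and of Delta, the kernel
   pair of f being replaced by any cell into [a] over [ft] whose top has the
   section [Dl]. *)
Definition diag_law X Y Q (a : lo X Y) (ft : th Q Y) (pi : lo Q X) : Prop :=
  forall R (ht : th R X) (fu : lo R Q) (Dl : th X R), cell fu a ht ft ->
    tcomp ht Dl = tid X ->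
    forall H : (Ml M pi \o Ml M fu) \o M0a M Dl = Ml M (lid X),
      push C H = lcomp pi fu.

Lemma diag_instance_exists X Y Q (a : lo X Y) (ft : th Q Y)
  (i : 'I_(M0o M X) -> 'I_(M0o M Q)) :
  M0a M ft \o i = Ml M a ->
  exists R (ht : th R X) (fu : lo R Q) (Dl : th X R),
    [/\ inhabited (cell fu a ht ft), tcomp ht Dl = tid X & Ml M fu \o M0a M Dl = i].
Proof.
move=> Ei; have [R [ht [fu [c]]]] := cell_pullback a ft.
have [d [Ed1 Ed2]] := pb_factor (m_cell HM c) (p2 := id) Ei.
have [Dl [EDl EhtDl]] : exists Dl : th X R, M0a M Dl = d /\ tcomp ht Dl = tid X.
  by apply: tight_factor; rewrite Ed2 (m0_id HM).
by exists R, ht, fu, Dl; split; rewrite ?EDl.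
Qed.

(* Compare an arbitrary instance of (ii) for [a] with the given one for [a0]
   through the tight map they induce, then conclude by Beck-Chevalley. *)
Lemma diag_law_along X0 Y0 Q0 R0 (a0 : lo X0 Y0) (ft0 : th Q0 Y0) (pi0 : lo Q0 X0)
  (ht0 : th R0 X0) (fu0 : lo R0 Q0) (Dl0 : th X0 R0)
  (H0 : (Ml M pi0 \o Ml M fu0) \o M0a M Dl0 = Ml M (lid X0))
  X Y Q (a : lo X Y) (ft : th Q Y) (pi : lo Q X) (k : th X X0) (l : th Y Y0)
  (kap : th Q Q0) :
  injective (Ml M pi0) -> cell fu0 a0 ht0 ft0 -> tcomp ht0 Dl0 = tid X0 ->
  push C H0 = lcomp pi0 fu0 ->
  cell a a0 k l -> cell pi pi0 kap k -> tcomp ft0 kap = tcomp l ft ->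
  diag_law a ft pi.
Proof.
move=> pi0_inj c0 E0 P0 ca cp Eft R ht fu Dl c E H.
have Ecc : M0a M ft0 \o (M0a M kap \o Ml M fu) = Ml M a0 \o M0a M (tcomp k ht).
  apply: functional_extensionality => z /=.
  by rewrite -M0a_compE Eft !M0a_compE -(cell_squareE c) -(cell_squareE ca).
have [s [Es1 Es2]] := pb_factor (m_cell HM c0) Ecc.
have [y [Ey Eht0y]] := tight_factor Es2.
have [cy] : inhabited (cell fu fu0 y kap).
  by apply: (cell_factor (ccomp ca c) c0 Eht0y Eft); rewrite Ey.
have EyDl : tcomp y Dl = tcomp Dl0 k.
  apply: M0a_inj; rewrite !(m0_comp HM) Ey.
  apply: (pb_mono (m_cell HM c0)); apply: functional_extensionality => z /=.
    have /= -> := equal_f Es1 (M0a M Dl z); apply: pi0_inj.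
    rewrite (cell_squareE cp); have /= -> := equal_f H z.
    by have /= -> := equal_f H0 (M0a M k z); rewrite !(ml_id HM).
  have /= -> := equal_f Es2 (M0a M Dl z).
  by rewrite M0a_compE -(M0a_compE ht) -(M0a_compE ht0) E E0 !(m0_id HM).
have c2 : cell (lcomp pi fu) (push C H0) y k by rewrite P0; exact: clcomp cp cy.
have H' : Ml M (lcomp pi fu) \o M0a M Dl = Ml M (lid X) by rewrite (ml_comp HM).
by rewrite (cart_BC HC (clid k) c2 EyDl H'); apply: push_ext; rewrite ?(ml_comp HM).
Qed.

Lemma diag_law_of_instance X Y Q R0 (a : lo X Y) (ft : th Q Y) (pi : lo Q X)
  (ht0 : th R0 X) (fu0 : lo R0 Q) (Dl0 : th X R0)
  (H0 : (Ml M pi \o Ml M fu0) \o M0a M Dl0 = Ml M (lid X)) :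
  injective (Ml M pi) -> cell fu0 a ht0 ft -> tcomp ht0 Dl0 = tid X ->
  push C H0 = lcomp pi fu0 -> diag_law a ft pi.
Proof.
move=> pi_inj c0 E0 P0; apply: (diag_law_along pi_inj c0 E0 P0 (cid a) (cid pi)).
by rewrite (tcomp1l HD) (tcomp1r HD).
Qed.

(* [a] is the unit of an algebraic product of [X] along [Ml M a], up to the
   bijection [Ml M pi]; [counit_law] is condition (i). *)
Definition prealg_product X Y Q (a : lo X Y) (ft : th Q Y) (pi : lo Q X) : Prop :=
  [/\ bijective (Ml M pi), M0a M ft = Ml M a \o Ml M pi & diag_law a ft pi].

Definition counit_law X Y Q (a : lo X Y) (ft : th Q Y) (pi : lo Q X) : Prop :=
  forall H : id \o M0a M ft = Ml M (lcomp a pi), push C H = lid Y.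

Definition alg_opcartesian X Y (a : lo X Y) : Prop :=
  exists Q (ft : th Q Y) (pi : lo Q X), prealg_product a ft pi /\ counit_law a ft pi.

Lemma prealg_instance X Y Q (a : lo X Y) (ft : th Q Y) (pi : lo Q X) :
  prealg_product a ft pi ->
  exists R (ht : th R X) (fu : lo R Q) (Dl : th X R)
         (H : (Ml M pi \o Ml M fu) \o M0a M Dl = Ml M (lid X)),
    [/\ inhabited (cell fu a ht ft), tcomp ht Dl = tid X & push C H = lcomp pi fu].
Proof.
case=> [[i piK iK] Eft law].
have Ei : M0a M ft \o i = Ml M a.
  by rewrite Eft; apply: functional_extensionality => x /=; rewrite iK.
have [R [ht [fu [Dl [[c] E Efu]]]]] := diag_instance_exists Ei.
have H : (Ml M pi \o Ml M fu) \o M0a M Dl = Ml M (lid X).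
  rewrite (ml_id HM); apply: functional_extensionality => x /=.
  by have /= -> := equal_f Efu x; rewrite iK.
by exists R, ht, fu, Dl, H; split; [exists | | exact: law c E H].
Qed.

Lemma diag_law_cell X0 Y0 Q0 (a0 : lo X0 Y0) (ft0 : th Q0 Y0) (pi0 : lo Q0 X0)
  X Y Q (a : lo X Y) (ft : th Q Y) (pi : lo Q X) (k : th X X0) (l : th Y Y0)
  (kap : th Q Q0) :
  prealg_product a0 ft0 pi0 -> cell a a0 k l -> cell pi pi0 kap k ->
  tcomp ft0 kap = tcomp l ft -> diag_law a ft pi.
Proof.
move=> pre; have [pi0_bij _ _] := pre.
have [R0 [ht0 [fu0 [Dl0 [H0 [[c0] E0 P0]]]]]] := prealg_instance pre.
exact: (diag_law_along (bij_inj pi0_bij) c0 E0 P0).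
Qed.

Lemma prealg_push_lcomp X Y Q (a : lo X Y) (ft : th Q Y) (pi : lo Q X) :
  prealg_product a ft pi ->
  forall Z (w : lo X Z) g (H : g \o M0a M ft = Ml M (lcomp w pi)),
  g \o Ml M a = Ml M w -> lcomp (push C H) a = w.
Proof.
move=> /prealg_instance [R [ht [fu [Dl [H0 [[c] E P0]]]]]] Z w g H Eg.
have H1 : (g \o Ml M a) \o M0a M ht = Ml M (lcomp (lcomp w pi) fu).
  apply: functional_extensionality => x /=.
  by rewrite (cell_squareE c) !Ml_compE; have /= -> := equal_f H (Ml M fu x); rewrite Ml_compE.
rewrite -(push_frob c H H1) //.
have H2 : (Ml M w \o (Ml M pi \o Ml M fu)) \o M0a M Dl = Ml M (lcomp w (lid X)).
  by rewrite (ml_comp HM) -H0.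
have Ew : push C H2 = lcomp (lcomp w pi) fu.
  by rewrite (push_tail H0 H2 erefl) P0 (lcompA HD).
have H3 : (g \o Ml M a) \o M0a M ht = Ml M (push C H2) by rewrite Ew.
have H4 : (g \o Ml M a) \o M0a M (tcomp ht Dl) = Ml M (lcomp w (lid X)).
  by rewrite E (m0_id HM) (lcomp1r HD) Eg.
rewrite (push_ext H1 H3 (esym Ew) erefl erefl) (push_comp H3 H4) //.
by rewrite (push_tid H4 E) (lcomp1r HD).
Qed.

Lemma alg_opcartesian_opcartesian X Y (a : lo X Y) :
  alg_opcartesian a -> opcartesian M a.
Proof.
move=> [Q [ft [pi [pre cu]]]] Z w g Eg; have [_ Eft _] := pre.
have H : g \o M0a M ft = Ml M (lcomp w pi) by rewrite Eft (ml_comp HM) -Eg.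
exists (push C H); split; first by split; [exact: (push_over HC) | exact: prealg_push_lcomp].
move=> v [Ev1 Ev2].
have Hi : id \o M0a M ft = Ml M (lcomp a pi) by rewrite Eft (ml_comp HM).
have Hv : Ml M v \o M0a M ft = Ml M (lcomp v (lcomp a pi)) by rewrite Eft !(ml_comp HM).
rewrite -[v](lcomp1r HD) -(cu Hi) -(push_tail Hi Hv erefl).
by apply: push_ext; rewrite // (lcompA HD) Ev2.
Qed.

Lemma prealg_cell_lcomp X P Q (a : lo X P) (ft : th Q P) (pi : lo Q X) :
  prealg_product a ft pi ->
  forall R Q' (u' : th R Q') (rho : lo R X) (t' : lo R Q) h
    (H : h \o M0a M u' = Ml M (lcomp a rho)),
  cell t' (push C H) u' ft -> Ml M pi \o Ml M t' = Ml M rho -> lcomp pi t' = rho.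
Proof.
move=> pre R Q' u' rho t' h H c Et'; have [pi_bij _ _] := pre.
(* Pulled back along [ht0] and then along [Dl0], both [lcomp pi t'] and [rho]
   become pushforwards of one loose arrow [gam]. *)
have [R0 [ht0 [fu0 [Dl0 [H0 [[c0] E0 P0]]]]]] := prealg_instance pre.
have [X' [x [r [c1]]]] := cell_pullback rho ht0.
have [f' [Ht' [Ef' Et't]]] := cell_push_left (clcomp c0 c1) c.
have Hpt' : (Ml M pi \o Ml M t') \o M0a M f' = Ml M (lcomp pi (lcomp fu0 r)).
  by rewrite (ml_comp HM) -Ht'.
have -> : lcomp pi t' = push C Hpt' by rewrite (push_tail Ht' Hpt' erefl) -Et't.
have [W [kk [gam [c2]]]] := cell_pullback r Dl0.
have Hgam : ((Ml M pi \o Ml M fu0) \o Ml M r) \o M0a M kk = Ml M (lcomp (lid X) gam).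
  apply: functional_extensionality => w /=; rewrite (cell_squareE c2).
  by have /= -> := equal_f H0 (Ml M gam w); rewrite Ml_compE.
have Egam : push C Hgam = lcomp pi (lcomp fu0 r).
  by rewrite (push_frob c2 H0 Hgam erefl) P0 (lcompA HD).
have Hpt'2 : (Ml M pi \o Ml M t') \o M0a M f' = Ml M (push C Hgam) by rewrite Egam.
rewrite (push_ext Hpt' Hpt'2 (esym Egam) erefl erefl).
have c12 := ccomp c1 c2; rewrite E0 in c12.
have Hrho : Ml M rho \o M0a M (tcomp x kk) = Ml M gam.
  by rewrite (pb_comm (m_cell HM c12)) (m0_id HM).
have Hrho' : (Ml M pi \o Ml M t') \o M0a M (tcomp x kk) = Ml M (lcomp (lid X) gam).
  by rewrite (lcomp1l HD) Et'.
have Exk : tcomp x kk = tcomp f' kk.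
  apply: M0a_inj; rewrite !(m0_comp HM).
  apply: (pb_mono (m_cell HM c)); apply: functional_extensionality => w /=.
    apply: (bij_inj pi_bij); have /= -> := equal_f Et' (M0a M x (M0a M kk w)).
    rewrite -M0a_compE; have /= -> := equal_f Hrho w.
    have /= -> := equal_f Ht' (M0a M kk w); rewrite Ml_compE (cell_squareE c2).
    by have /= -> := equal_f H0 (Ml M gam w); rewrite (ml_id HM).
  by rewrite -!M0a_compE Ef'.
rewrite (push_comp Hpt'2 Hrho' Exk) [in RHS](cell_tid_push c12 Hrho).
by apply: push_ext; rewrite ?(lcomp1l HD).
Qed.

Lemma opcartesian_iso X Y P (a : lo X Y) (b : lo X P) (beta : 'I_(M0o M P) -> 'I_(M0o M Y)) :
  bijective beta -> beta \o Ml M b = Ml M a -> opcartesian M a -> opcartesian M b ->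
  exists (v : lo P Y) (v' : lo Y P),
    [/\ lcomp v v' = lid Y, lcomp v' a = b & bijective (Ml M v')].
Proof.
move=> [beta' bK bK'] Eb oa ob.
have [v [[Ev Eva] _]] := ob Y a beta Eb.
have Eb' : beta' \o Ml M a = Ml M b.
  by rewrite -Eb; apply: functional_extensionality => x /=; rewrite bK.
have [v' [[Ev' Ev'b] _]] := oa P b beta' Eb'.
exists v, v'; split=> //; last by rewrite Ev'; exists beta.
have [w [_ Uw]] := oa Y a id erefl.
rewrite -(Uw (lcomp v v')) ?(Uw (lid Y)) //; split.
- by rewrite (ml_id HM).
- by rewrite (lcomp1l HD).
- by rewrite (ml_comp HM) Ev Ev'; apply: functional_extensionality => x /=; rewrite bK'.
- by rewrite -(lcompA HD) Ev'b Eva.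
Qed.

Lemma alg_opcartesian_iso X Y P (a : lo X Y) (b : lo X P) (v : lo P Y) (v' : lo Y P) :
  lcomp v v' = lid Y -> lcomp v' a = b -> bijective (Ml M v') ->
  alg_opcartesian b -> alg_opcartesian a.
Proof.
move=> Evv Eb [w' v'K wK] [Qb [ftb [pib [[pib_bij Eftb law] cu]]]].
have Ev : Ml M v = w'.
  apply: functional_extensionality => y; rewrite -{1}[y]wK -Ml_compE Evv.
  by rewrite (ml_id HM).
have Eva : lcomp v b = a by rewrite -Eb (lcompA HD) Evv (lcomp1l HD).
have [Qa [fta [iq [iq_bij Efta]]]] := tight_lift_bij (Ml M v \o M0a M ftb).
have Hpb : isPullback iq (Ml M v') (M0a M fta) (M0a M ftb).
  apply: pb_bij => //; first exact: can_inj v'K.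
  by rewrite Efta Ev; apply: functional_extensionality => x /=; rewrite wK.
have [v2 [c2 Ev2]] := cell_lift Hpb.
exists Qa, fta, (lcomp pib v2); split; first split.
- by rewrite (ml_comp HM) Ev2; exact: bij_comp.
- by rewrite Efta Eftb -Eva !(ml_comp HM) Ev2.
- move=> R ht fu Dl c E H.
  have cb : cell (lcomp v2 fu) b ht ftb by rewrite -Eb; exact: clcomp c2 c.
  have H' : (Ml M pib \o Ml M (lcomp v2 fu)) \o M0a M Dl = Ml M (lid X).
    by rewrite -H !(ml_comp HM).
  rewrite -(lcompA HD) -(law R ht _ Dl cb E H').
  by apply: push_ext; rewrite ?(ml_comp HM).
move=> H.
have Hi : id \o M0a M ftb = Ml M (lcomp b pib) by rewrite Eftb (ml_comp HM).
have Hv : Ml M v \o M0a M ftb = Ml M (lcomp v (lcomp b pib)) by rewrite Eftb !(ml_comp HM).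
have Ea : lcomp a (lcomp pib v2) = lcomp (lcomp v (lcomp b pib)) v2.
  by rewrite -Eva !(lcompA HD).
have H1 : id \o M0a M fta = Ml M (lcomp (lcomp v (lcomp b pib)) v2) by rewrite -Ea.
rewrite (push_ext H H1 Ea erefl erefl) (push_frob c2 Hv H1).
  by rewrite (push_tail Hi Hv erefl) cu (lcomp1r HD).
by rewrite -(ml_comp HM) Evv (ml_id HM).
Qed.

Lemma alg_opcartesian_cell A B Y Z (f : lo A B) (a : lo Y Z) k l :
  cell f a k l -> alg_opcartesian a -> alg_opcartesian f.
Proof.
move=> c [Qa [fta [pia [pre cu]]]]; have [[ia piaK iaK] Efta _] := pre.
have [Qf [ftf [iB [iB_bij Eftf]]]] := tight_lift_bij (Ml M f).
have Es : M0a M fta \o (ia \o M0a M k \o iB) = M0a M (tcomp l ftf).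
  rewrite Efta (m0_comp HM) Eftf; apply: functional_extensionality => x /=.
  by rewrite iaK (cell_squareE c).
have [kap [Ekap Eftkap]] := tight_factor Es.
have Hpb : isPullback iB (Ml M pia) (M0a M kap) (M0a M k).
  apply: pb_bij => //; first exact: can_inj piaK.
  by rewrite Ekap; apply: functional_extensionality => x /=; rewrite iaK.
have [pif [cp Epif]] := cell_lift Hpb.
exists Qf, ftf, pif; split; first split.
- by rewrite Epif.
- by rewrite Eftf Epif.
- exact: (diag_law_cell pre c cp).
move=> H.
have Hi : id \o M0a M fta = Ml M (lcomp a pia) by rewrite Efta (ml_comp HM).
have c2 : cell (lid B) (push C Hi) l l by rewrite cu; exact: clid.
have Hb : Ml M (lid B) \o M0a M ftf = Ml M (lcomp f pif) by rewrite (ml_id HM).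
rewrite (cart_BC HC (clcomp c cp) c2 (esym Eftkap) Hb).
by apply: push_ext; rewrite ?(ml_id HM).
Qed.

(* [univ_product] without the transports along equalities of finite sets. *)
Definition univ_prop X P Q (f : 'I_(M0o M X) -> 'I_(M0o M P)) (ft : th Q P)
  (pi : lo Q X) : Prop :=
  forall R Q' (u' : th R Q') (rho : lo R X) h,
  isPullback (M0a M u') f (Ml M rho) h ->
  exists! p : {t' : lo R Q & {t : lo Q' P & cell t' t u' ft}},
    Ml M (projT1 (projT2 p)) = h /\ rho = lcomp pi (projT1 p).

Lemma prealg_univ_prop X P Q (a : lo X P) (ft : th Q P) (pi : lo Q X) :
  prealg_product a ft pi -> counit_law a ft pi -> univ_prop (Ml M a) ft pi.
Proof.
move=> pre cu R Q' u' rho h Hpb; have [[i piK iK] Eft _] := pre.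
have Ht : h \o M0a M u' = Ml M (lcomp a rho) by rewrite (ml_comp HM) -(pb_comm Hpb).
have Hpb2 : isPullback (i \o Ml M rho) (Ml M (push C Ht)) (M0a M u') (M0a M ft).
  rewrite (push_over HC) Eft; apply: pb_shift_bij; first by exists (Ml M pi).
  have -> : (Ml M a \o Ml M pi) \o i = Ml M a.
    by apply: functional_extensionality => x /=; rewrite iK.
  exact: pb_sym Hpb.
have [t' [c Et']] := cell_lift Hpb2.
have Erho : lcomp pi t' = rho.
  apply: (prealg_cell_lcomp pre c).
  by rewrite Et'; apply: functional_extensionality => x /=; rewrite iK.
exists (existT _ t' (existT _ (push C Ht) c)); split.
  by split; [exact: (push_over HC) | rewrite Erho].
move=> [t2' [t2 c2]] /= [Et2 Erho2].
have Et2p : t2 = push C Ht.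
  have Hi : id \o M0a M ft = Ml M (lcomp a pi) by rewrite Eft (ml_comp HM).
  have H1 : Ml M t2 \o M0a M u' = Ml M (lcomp (lcomp a pi) t2').
    by rewrite !(ml_comp HM) -Eft; exact: (pb_comm (m_cell HM c2)).
  have := push_frob c2 Hi H1 erefl; rewrite cu (lcomp1l HD) => <-.
  by apply: push_ext; rewrite ?Et2 // -(lcompA HD) -Erho2.
subst t2.
have Et2' : Ml M t' = Ml M t2'.
  rewrite Et'; apply: functional_extensionality => x /=.
  by rewrite Erho2 Ml_compE piK.
have Ec := cell_lift_uniq c c2 Et2'.
have /= ef := f_equal (@projT1 _ _) Ec; subst t2'.
by rewrite (existT_inj Ec).
Qed.

Lemma univ_prop_unit X P Q (f : 'I_(M0o M X) -> 'I_(M0o M P)) (ft : th Q P)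
  (pi : lo Q X) :
  bijective (Ml M pi) -> M0a M ft = f \o Ml M pi -> univ_prop f ft pi ->
  exists u : lo X P, Ml M u = f /\ prealg_product u ft pi.
Proof.
move=> pi_bij Eft U.
have [K [F [k Hpb]]] := pb_exists f f.
have [R [ht [e Eht]]] := tight_lift F.
subst K; rewrite castf_id in Eht.
have [d [Ed1 Ed2]] := pb_factor Hpb (p1 := id) (p2 := id) erefl.
have [Dl [EDl E]] : exists Dl : th X R, M0a M Dl = d /\ tcomp ht Dl = tid X.
  by apply: tight_factor; rewrite Eht Ed1 (m0_id HM).
have H0 : k \o M0a M Dl = Ml M (lid X) by rewrite EDl Ed2 (ml_id HM).
have Hpb' : isPullback (M0a M ht) f (Ml M (push C H0)) f by rewrite (push_over HC) Eht.
have [[fu [u c]] [[/= Eu Erho] _]] := U R X ht (push C H0) f Hpb'.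
exists u; split=> //; split=> //; first by rewrite Eft Eu.
have H0' : (Ml M pi \o Ml M fu) \o M0a M Dl = Ml M (lid X).
  by rewrite -(ml_comp HM) -Erho (push_over HC).
apply: (diag_law_of_instance (bij_inj pi_bij) c E (H0 := H0')).
by rewrite -Erho; apply: push_ext; rewrite // -(ml_comp HM) -Erho (push_over HC).
Qed.

Lemma univ_prop_counit X P Q (a : lo X P) (ft : th Q P) (pi : lo Q X) :
  prealg_product a ft pi -> univ_prop (Ml M a) ft pi -> counit_law a ft pi.
Proof.
move=> pre U H; have [[i piK iK] Eft _] := pre.
have Hpb : isPullback id (Ml M (push C H)) (M0a M ft) (M0a M ft).
  by rewrite (push_over HC); apply: pb_bij => //; exists id.
have [t' [c Et']] := cell_lift Hpb.
have Hpb2 : isPullback (M0a M ft) (Ml M a) (Ml M pi) id.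
  by apply: pb_sym; apply: pb_bij => //; exists i.
have [p [_ Up]] := U Q P ft pi id Hpb2.
have E1 := Up (existT _ t' (existT _ (push C H) c)).
have E2 := Up (existT _ (lid Q) (existT _ (lid P) (clid ft))).
have /= := f_equal (fun p => projT1 (projT2 p)) (etrans (esym (E1 _)) (E2 _)); apply.
  by split; [exact: (push_over HC) | rewrite (prealg_cell_lcomp pre c) // Et'].
by split; rewrite ?(ml_id HM) ?(lcomp1r HD).
Qed.

Lemma opcartesian_unit X Y Q (u : lo X Y) (ft : th Q Y) (p : 'I_(M0o M Q) -> 'I_(M0o M X)) :
  representable M -> opcartesian M u -> bijective p -> M0a M ft = Ml M u \o p ->
  exists pi : lo Q X, Ml M pi = p /\ prealg_product u ft pi.
Proof.
move=> [_ Hst] ou [i pK iK] Eft.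
have Ei : M0a M ft \o i = Ml M u.
  by rewrite Eft; apply: functional_extensionality => x /=; rewrite iK.
have [R [ht [fu [Dl [[c] E Efu]]]]] := diag_instance_exists Ei.
have H0 : (p \o Ml M fu) \o M0a M Dl = Ml M (lid X).
  rewrite (ml_id HM); apply: functional_extensionality => x /=.
  by have /= -> := equal_f Efu x; rewrite iK.
have [pi [[Epi Epifu] _]] := Hst _ _ _ _ _ _ _ _ c ou X (push C H0) p (esym (push_over HC H0)).
exists pi; split=> //; split; [by rewrite Epi; exists i | by rewrite Epi |].
have H0' : (Ml M pi \o Ml M fu) \o M0a M Dl = Ml M (lid X) by rewrite Epi.
apply: (diag_law_of_instance _ c E (H0 := H0')); first by rewrite Epi; exact: can_inj pK.
by rewrite Epifu; apply: push_ext; rewrite ?Epi.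
Qed.

Lemma opcartesian_counit X Y Q (u : lo X Y) (ft : th Q Y) (pi : lo Q X) :
  prealg_product u ft pi -> opcartesian M u -> counit_law u ft pi.
Proof.
move=> pre ou H; have [w [_ Uw]] := ou Y u id erefl.
rewrite -(Uw (push C H)) ?(Uw (lid Y)) //; split.
- by rewrite (ml_id HM).
- by rewrite (lcomp1l HD).
- exact: (push_over HC).
- exact: (prealg_push_lcomp pre H).
Qed.

Lemma alg_product_prealg X J (f : 'I_(M0o M X) -> 'I_J) P Q (eP : M0o M P = J)
  (eQ : M0o M Q = M0o M X) ft pi u :
  alg_product C f eP eQ ft pi u -> prealg_product u ft pi /\ counit_law u ft pi.
Proof.
subst J; rewrite /alg_product castf_id => -[Eft Epi Eu cu law]; split=> //.
have pi_bij : bijective (Ml M pi).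
  by rewrite Epi; exists (cast_ord (esym eQ)) => x; apply: val_inj.
have Eft' : M0a M ft = Ml M u \o Ml M pi.
  by rewrite Eft Eu Epi; apply: functional_extensionality => x; rewrite /castf /= !cast_ord_id.
split=> // R ht fu Dl c E H.
have Hpb : isPullback (Ml M pi \o Ml M fu) f (M0a M ht) f.
  by apply: pb_shift_bij => //; rewrite -Eu -Eft'; exact: (m_cell HM c).
have Efu : Ml M fu = castf erefl eQ (Ml M pi \o Ml M fu).
  apply: functional_extensionality => x; apply: val_inj.
  by rewrite /castf /= Epi /castf /= cast_ord_id.
have Ed1 : (Ml M pi \o Ml M fu) \o M0a M Dl = id by rewrite H (ml_id HM).
have Ed2 : M0a M ht \o M0a M Dl = id by rewrite -(m0_comp HM) E (m0_id HM).
have H' : castf erefl erefl (Ml M pi \o Ml M fu) \o M0a M Dl = Ml M (lid X).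
  by rewrite castf_id.
rewrite -(law _ _ _ Hpb R erefl ht (esym (castf_id _)) fu c Efu _ Ed1 Ed2 Dl
  (esym (castf_id _)) H').
by apply: push_ext; rewrite ?castf_id.
Qed.

Lemma prealg_alg_product X Q P (f : 'I_(M0o M X) -> 'I_(M0o M P))
  (eQ : M0o M Q = M0o M X) (ft : th Q P) (pi : lo Q X) (u : lo X P) :
  M0a M ft = castf eQ erefl f -> Ml M pi = castf eQ erefl id -> Ml M u = f ->
  diag_law u ft pi -> counit_law u ft pi -> alg_product C f erefl eQ ft pi u.
Proof.
move=> Eft Epi Eu law cu; split; rewrite ?castf_id //.
move=> K l h Hpb R eR ht Eht fu c Efu d Ed1 Ed2 Dl EDl H.
subst K; rewrite !castf_id in Eht EDl.
have E : tcomp ht Dl = tid X.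
  by apply: M0a_inj; rewrite (m0_comp HM) (m0_id HM) Eht EDl Ed2.
have H' : (Ml M pi \o Ml M fu) \o M0a M Dl = Ml M (lid X).
  rewrite (ml_id HM) Epi Efu EDl; apply: functional_extensionality => x; apply: val_inj.
  by rewrite /castf /= cast_ord_id; have /= -> := equal_f Ed1 x.
rewrite -(law R ht fu Dl c E H'); apply: push_ext => //.
rewrite castf_id Epi Efu; apply: functional_extensionality => x; apply: val_inj.
by rewrite /castf /= cast_ord_id.
Qed.

Lemma univ_productP X P Q (f : 'I_(M0o M X) -> 'I_(M0o M P)) (eQ : M0o M Q = M0o M X)
  (ft : th Q P) (pi : lo Q X) :
  univ_product f erefl eQ ft pi <->
  [/\ M0a M ft = castf eQ erefl f, Ml M pi = castf eQ erefl id & univ_prop f ft pi].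
Proof.
split=> -[Eft Epi U]; split=> //.
  move=> R Q' u' rho h Hpb.
  have := U _ _ _ _ _ Hpb Q' R erefl erefl u' (esym (castf_id _)) rho (esym (castf_id _)).
  by rewrite castf_id.
move=> L K f' h' h Hpb Q' R eR eQ' u' Eu' rho Erho.
subst L K; rewrite !castf_id in Eu' Erho; subst f' h'.
by rewrite castf_id; exact: U.
Qed.

Lemma AP_UP : AP C -> UP M.
Proof.
move=> HAP X J f; have [P [Q [eP [eQ [ft [pi [u Hu]]]]]]] := HAP X J f.
subst J; have [Eft Epi Eu _ _] := Hu; have [pre cu] := alg_product_prealg Hu.
exists P, Q, erefl, eQ, ft, pi; apply/univ_productP; split=> //.
by rewrite castf_id in Eu; rewrite -Eu; exact: prealg_univ_prop.
Qed.

Lemma UP_AP : UP M -> AP C.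
Proof.
move=> HUP X J f; have [P [Q [eP [eQ [ft [pi HP]]]]]] := HUP X J f.
subst J; have [Eft Epi U] := iffLR (univ_productP _ _ _ _) HP.
have pi_bij : bijective (Ml M pi).
  by rewrite Epi; exists (cast_ord (esym eQ)) => x; apply: val_inj.
have Eft' : M0a M ft = f \o Ml M pi.
  by rewrite Eft Epi; apply: functional_extensionality => x; rewrite /castf /= !cast_ord_id.
have [u [Eu pre]] := univ_prop_unit pi_bij Eft' U; have [_ _ law] := pre.
exists P, Q, erefl, eQ, ft, pi, u; apply: prealg_alg_product => //.
by apply: univ_prop_counit pre _; rewrite Eu.
Qed.

Lemma AP_representable : AP C -> representable M.
Proof.
move=> HAP; split.
  move=> X n f; have [P [Q [eP [eQ [ft [pi [u Hu]]]]]]] := HAP X n f.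
  exists P, u, eP; split; first by case: Hu.
  by apply: alg_opcartesian_opcartesian; exists Q, ft, pi; exact: alg_product_prealg Hu.
move=> A B Y Z f u0 k l c ou0.
have [P [Q [eP [eQ [ft [pi [u Hu]]]]]]] := HAP Y (M0o M Z) (Ml M u0).
have au : alg_opcartesian u by exists Q, ft, pi; exact: alg_product_prealg Hu.
have Eu : cast_ord eP \o Ml M u = Ml M u0.
  case: Hu => _ _ -> _ _; apply: functional_extensionality => x; apply: val_inj.
  by rewrite /castf /= cast_ord_id.
have eP_bij : bijective (cast_ord eP) by exists (cast_ord (esym eP)) => x; apply: val_inj.
have [v [v' [Evv Ev'u0 v'_bij]]] :=
  opcartesian_iso eP_bij Eu ou0 (alg_opcartesian_opcartesian au).
apply/alg_opcartesian_opcartesian/(alg_opcartesian_cell c).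
exact: (alg_opcartesian_iso Evv Ev'u0 v'_bij au).
Qed.

Lemma representable_AP : representable M -> AP C.
Proof.
move=> HR X J f; have [Y [u [e [Eu ou]]]] := HR.1 X J f.
subst J; rewrite castf_id in Eu.
have [Q [ft [eQ Eft]]] := tight_lift f.
pose p := castf eQ erefl (@id 'I_(M0o M X)).
have p_bij : bijective p by exists (cast_ord (esym eQ)) => x; apply: val_inj.
have Eftp : M0a M ft = Ml M u \o p.
  by rewrite Eft Eu; apply: functional_extensionality => x; rewrite /p /castf /= !cast_ord_id.
have [pi [Epi pre]] := opcartesian_unit HR ou p_bij Eftp; have [_ _ law] := pre.
exists Y, Q, erefl, eQ, ft, pi, u.
by apply: prealg_alg_product => //; exact: opcartesian_counit.
Qed.

End Products.

Theorem theorem4p22 (D : DblCatData) (HD : DblCatLaws D)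
  (M : MultiData D) (HM : IsSymMulti M)
  (C : CartData M) (HC : IsCartesian C) :
  (AP C <-> UP M) /\ (UP M <-> representable M).
Proof.
split; split.
- exact: AP_UP.
- exact: UP_AP.
- by move=> /(UP_AP HD HM HC); exact: AP_representable.
- by move=> /(representable_AP HD HM HC); exact: AP_UP.
Qed.
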